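(* For the four-node network described in the context, with arbitrary crossover probabilities, define $\mathbb{C}_{1,4}=1-H(p_{1,4})$, $\mathbb{C}'=1-H(p')$, $\mathbb{C}''=1-H(p'')$ with $$p' = [(1-p_{1,3})(1-p_{2,3})+p_{1,3}p_{2,3}]\,p_{3,4} + [p_{1,3}(1-p_{2,3})+(1-p_{1,3})p_{2,3}](1-p_{3,4}),$$ $$p'' = p_{1,3}(1-p_{2,3})(1-p_{3,4})(1-p_{1,4}) + (1-p_{1,3})p_{2,3}(1-p_{3,4})(1-p_{1,4}) + (1-p_{1,3})(1-p_{2,3})p_{3,4}(1-p_{1,4}) + (1-p_{1,3})(1-p_{2,3})(1-p_{3,4})p_{1,4} + (1-p_{1,3})p_{2,3}p_{3,4}p_{1,4} + p_{1,3}(1-p_{2,3})p_{3,4}p_{1,4} + p_{1,3}p_{2,3}(1-p_{3,4})p_{1,4} + p_{1,3}p_{2,3}p_{3,4}(1-p_{1,4}).$$ Let $\Lambda_{\text{nc}}$ be the convex hull of the rate pairs $(R_A,R_B)$ with $R_A\le\mathbb{C}_{1,4}$, $R_B\le\mathbb{C}''$ (the achievable region of independent network-then-channel decoding); $\Lambda_{\text{serial}}$ the convex hull of those with $R_A\le\mathbb{C}_{1,4}$, $R_B\le\mathbb{C}'$ (the achievable region of serial decoding); and $\Lambda_{\text{joint}}$ the convex hull of those with $R_A\le\mathbb{C}_{1,4}+\mathbb{C}'-\mathbb{C}''$, $R_B\le\mathbb{C}'$, $R_A+R_B\le\mathbb{C}_{1,4}+\mathbb{C}'$ (the achievable region of joint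 decoding). Then $$\Lambda_{\text{nc}} \subseteq \Lambda_{\text{serial}} \subseteq \Lambda_{\text{joint}}.$$
   Context: Network: nodes $1,2,3,4$ with directed links $1\to3$, $1\to4$, $2\to3$, $3\to4$. Each link $i\to j$ is a binary symmetric channel with crossover probability $p_{i,j}\in[0,1]$; the link channels are independent and memoryless. Node 1 sends the same codeword (encoding message $A$) on links $1\to3$ and $1\to4$, node 2 sends a codeword (encoding message $B$) on link $2\to3$, and node 3 forwards the bitwise XOR of its two received vectors on link $3\to4$; node 4 decodes from its two received vectors. $H(p)=-p\log p-(1-p)\log(1-p)$ is the binary entropy function (base 2). Rate regions are subsets of pairs $(R_A,R_B)$ of nonnegative rates. *)

From Stdlib Require Import Reals List.
Import ListNotations.
Open Scope R_scope.

(* Binary entropy, base 2.  Stdlib's ln is 0 on nonpositive arguments, so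
   p * ln p = 0 at p = 0, giving the usual convention 0 log 0 = 0. *)
Definition Hb (p : R) : R :=
  - (p * ln p + (1 - p) * ln (1 - p)) / ln 2.

Definition p_prime (p13 p23 p34 : R) : R :=
  ((1 - p13) * (1 - p23) + p13 * p23) * p34
  + (p13 * (1 - p23) + (1 - p13) * p23) * (1 - p34).

Definition p_second (p13 p23 p34 p14 : R) : R :=
    p13 * (1 - p23) * (1 - p34) * (1 - p14)
  + (1 - p13) * p23 * (1 - p34) * (1 - p14)
  + (1 - p13) * (1 - p23) * p34 * (1 - p14)
  + (1 - p13) * (1 - p23) * (1 - p34) * p14
  + (1 - p13) * p23 * p34 * p14
  + p13 * (1 - p23) * p34 * p14
  + p13 * p23 * (1 - p34) * p14
  + p13 * p23 * p34 * (1 - p14).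

Definition conv_hull (S : R * R -> Prop) (x : R * R) : Prop :=
  exists l : list (R * (R * R)),
    Forall (fun wp => 0 <= fst wp /\ S (snd wp)) l /\
    fold_right (fun wp acc => fst wp + acc) 0 l = 1 /\
    fst x = fold_right (fun wp acc => fst wp * fst (snd wp) + acc) 0 l /\
    snd x = fold_right (fun wp acc => fst wp * snd (snd wp) + acc) 0 l.

Section Regions.
Variables p13 p14 p23 p34 : R.

Definition C14 : R := 1 - Hb p14.
Definition Cp : R := 1 - Hb (p_prime p13 p23 p34).
Definition Cpp : R := 1 - Hb (p_second p13 p23 p34 p14).

Definition nc_set (r : R * R) : Prop :=
  0 <= fst r /\ 0 <= snd r /\ fst r <= C14 /\ snd r <= Cpp.
Definition serial_set (r : R * R) : Prop :=
  0 <= fst r /\ 0 <= snd r /\ fst r <= C14 /\ snd r <= Cp.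
Definition joint_set (r : R * R) : Prop :=
  0 <= fst r /\ 0 <= snd r /\ fst r <= C14 + Cp - Cpp /\ snd r <= Cp /\
  fst r + snd r <= C14 + Cp.

Definition Lambda_nc := conv_hull nc_set.
Definition Lambda_serial := conv_hull serial_set.
Definition Lambda_joint := conv_hull joint_set.
End Regions.

(* Since [C' = 1 - H(p')] and [C'' = 1 - H(p'')], the inequality [C'' <= C'] is all
   that is needed for both inclusions: the defining rectangles (and the joint pentagon)
   are then nested pointwise, and convex hulls are monotone.  The inequality holds
   because [p''] is the crossover probability of the cascade of a BSC([p']) with a
   BSC([p14]), i.e. [p'' = p' (1 - p14) + (1 - p') p14], and such a mixture can only
   increase binary entropy.  The latter is Gibbs' inequality: [h(c)] is a convex
   combination of two cross entropies of [c] against [a] and [1 - a], each of which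
   is at least [h(a)]. *)
From Stdlib Require Import Reals Lra Psatz List.
Open Scope R_scope.

Definition bsc_cascade (a q : R) : R := a * (1 - q) + (1 - a) * q.

Lemma bsc_cascade_bounds (a q : R) :
  0 <= a <= 1 -> 0 <= q <= 1 -> 0 <= bsc_cascade a q <= 1.
Proof. intros Ha Hq; unfold bsc_cascade; split; nra. Qed.

Lemma bsc_cascade_interior (a q : R) :
  0 <= a <= 1 -> 0 < q < 1 -> 0 < bsc_cascade a q < 1.
Proof. intros Ha Hq; unfold bsc_cascade; split; nra. Qed.

Lemma p_prime_cascade (p13 p23 p34 : R) :
  p_prime p13 p23 p34 = bsc_cascade (bsc_cascade p13 p23) p34.
Proof. unfold p_prime, bsc_cascade; ring. Qed.

Lemma p_second_cascade (p13 p23 p34 p14 : R) :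
  p_second p13 p23 p34 p14 = bsc_cascade (p_prime p13 p23 p34) p14.
Proof. unfold p_second, p_prime, bsc_cascade; ring. Qed.

Lemma ln_le_sub_1 (x : R) : 0 < x -> ln x <= x - 1.
Proof.
  intros Hx. assert (H := exp_ineq1_le (ln x)).
  rewrite exp_ln in H by exact Hx. lra.
Qed.

Lemma cross_entropy_term_le (a c : R) : 0 <= a -> 0 < c ->
  a * ln c - a * ln a <= c - a.
Proof.
  intros Ha Hc. destruct (Req_dec a 0) as [->|Ha0]; [lra|].
  assert (Hlog : ln c - ln a = ln (c / a)).
  { assert (Hinv : 0 < / a) by (apply Rinv_0_lt_compat; lra).
    unfold Rdiv; rewrite ln_mult, ln_Rinv by lra. ring. }
  assert (Hle := ln_le_sub_1 (c / a) ltac:(apply Rdiv_lt_0_compat; lra)).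
  replace (a * ln c - a * ln a) with (a * ln (c / a)) by (rewrite <- Hlog; ring).
  replace (c - a) with (a * (c / a - 1)) by (field; exact Ha0).
  apply Rmult_le_compat_l; lra.
Qed.

Lemma binary_gibbs (a c : R) : 0 <= a <= 1 -> 0 < c < 1 ->
  a * ln c + (1 - a) * ln (1 - c) <= a * ln a + (1 - a) * ln (1 - a).
Proof.
  intros Ha Hc.
  assert (H1 := cross_entropy_term_le a c ltac:(lra) ltac:(lra)).
  assert (H2 := cross_entropy_term_le (1 - a) (1 - c) ltac:(lra) ltac:(lra)).
  lra.
Qed.

Lemma Hb_1_sub (a : R) : Hb (1 - a) = Hb a.
Proof. unfold Hb. replace (1 - (1 - a)) with a by ring. f_equal. f_equal. ring. Qed.

Lemma Hb_le_bsc_cascade (a q : R) : 0 <= a <= 1 -> 0 <= q <= 1 ->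
  Hb a <= Hb (bsc_cascade a q).
Proof.
  intros Ha Hq.
  destruct (Req_dec q 0) as [->|Hq0].
  { replace (bsc_cascade a 0) with a by (unfold bsc_cascade; ring). lra. }
  destruct (Req_dec q 1) as [->|Hq1].
  { replace (bsc_cascade a 1) with (1 - a) by (unfold bsc_cascade; ring).
    rewrite Hb_1_sub; lra. }
  set (c := bsc_cascade a q).
  assert (Hc : 0 < c < 1) by (apply bsc_cascade_interior; lra).
  assert (G1 := binary_gibbs a c Ha Hc).
  assert (G2 := binary_gibbs (1 - a) c ltac:(lra) Hc).
  replace (1 - (1 - a)) with a in G2 by ring.
  assert (Hmix : c * ln c + (1 - c) * ln (1 - c) =
      (1 - q) * (a * ln c + (1 - a) * ln (1 - c))
      + q * ((1 - a) * ln c + a * ln (1 - c)))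
    by (unfold c, bsc_cascade; ring).
  assert (Hneg : c * ln c + (1 - c) * ln (1 - c) <= a * ln a + (1 - a) * ln (1 - a))
    by (rewrite Hmix; nra).
  unfold Hb, Rdiv. apply Rmult_le_compat_r; [|lra].
  left. apply Rinv_0_lt_compat. assert (H := ln_lt_2). lra.
Qed.

Lemma Cpp_le_Cp (p13 p14 p23 p34 : R) :
  0 <= p13 <= 1 -> 0 <= p14 <= 1 -> 0 <= p23 <= 1 -> 0 <= p34 <= 1 ->
  Cpp p13 p14 p23 p34 <= Cp p13 p23 p34.
Proof.
  intros h13 h14 h23 h34. unfold Cpp, Cp.
  assert (Hp : 0 <= p_prime p13 p23 p34 <= 1).
  { rewrite p_prime_cascade. auto using bsc_cascade_bounds. }
  rewrite p_second_cascade.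
  assert (H := Hb_le_bsc_cascade _ p14 Hp h14). lra.
Qed.

Lemma conv_hull_mono (S T : R * R -> Prop) : (forall x, S x -> T x) ->
  forall r, conv_hull S r -> conv_hull T r.
Proof.
  intros HST r [l [Hl Hsum]]. exists l. split; [|exact Hsum].
  eapply Forall_impl; [|exact Hl]. simpl. intros wp [Hw HS]. auto.
Qed.

Theorem theorem4 (p13 p14 p23 p34 : R)
  (h13 : 0 <= p13 <= 1) (h14 : 0 <= p14 <= 1)
  (h23 : 0 <= p23 <= 1) (h34 : 0 <= p34 <= 1) :
  (forall r : R * R, Lambda_nc p13 p14 p23 p34 r -> Lambda_serial p13 p14 p23 p34 r) /\
  (forall r : R * R, Lambda_serial p13 p14 p23 p34 r -> Lambda_joint p13 p14 p23 p34 r).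
Proof.
  assert (Hle := Cpp_le_Cp p13 p14 p23 p34 h13 h14 h23 h34).
  split; apply conv_hull_mono; intros [a b];
    unfold nc_set, serial_set, joint_set; simpl; lra.
Qed.
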